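(* Let $(S,\sqcup,\cap)$ be an ado-semilattice and $a,b,d\in S$. If $a$ and $b$ have an upper bound in $(S,\leq)$ and $d\lesssim a$ and $d\lesssim b$, then $d\lesssim a\cap b$.
   Context: An o-semilattice is an algebra $(L,\cap,\sqcup)$ such that $(L,\cap)$ is a semilattice and, with $x\leq y$ iff $x=x\cap y$, for all $x,y,z$: (i) $x\leq x\sqcup y$; (ii) $(x\cap y)\sqcup(y\cap z)\leq y$; (iii) $x\sqcup y\leq x\sqcup(y\cap(x\sqcup y))$; (iv) $x\cap z\leq(x\cap y)\sqcup z$. It is distributive if $(a\cap d)\sqcup((b\cap d)\cap(c\cap d))=((a\cap d)\sqcup(b\cap d))\cap((a\cap d)\sqcup(c\cap d))$ for all $a,b,c,d$. An ado-semilattice is a distributive o-semilattice in which $\sqcup$ is associative. Here $\leq$ is the semilattice order ($x\leq y$ iff $x=x\cap y$) and $x\lesssim y$ means $y\sqcup x=y$. *)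

Definition sle {L : Type} (cap : L -> L -> L) (x y : L) : Prop := x = cap x y.

Definition is_semilattice {L : Type} (cap : L -> L -> L) : Prop :=
  (forall x y z, cap x (cap y z) = cap (cap x y) z) /\
  (forall x y, cap x y = cap y x) /\
  (forall x, cap x x = x).

Definition is_o_semilattice {L : Type} (cap cup : L -> L -> L) : Prop :=
  is_semilattice cap /\
  (forall x y, sle cap x (cup x y)) /\
  (forall x y z, sle cap (cup (cap x y) (cap y z)) y) /\
  (forall x y, sle cap (cup x y) (cup x (cap y (cup x y)))) /\
  (forall x y z, sle cap (cap x z) (cup (cap x y) z)).

Definition is_distributive {L : Type} (cap cup : L -> L -> L) : Prop :=
  forall a b c d,
    cup (cap a d) (cap (cap b d) (cap c d)) =
    cap (cup (cap a d) (cap b d)) (cup (cap a d) (cap c d)).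

Definition is_ado_semilattice {L : Type} (cap cup : L -> L -> L) : Prop :=
  is_o_semilattice cap cup /\ is_distributive cap cup /\
  (forall x y z, cup x (cup y z) = cup (cup x y) z).

Definition slesssim {L : Type} (cup : L -> L -> L) (x y : L) : Prop := cup y x = y.

From Stdlib Require Import Setoid.

Set Implicit Arguments.

(* Let u be a common upper bound of a and b, and put c := a ∩ b, w := c ⊔ d,
   z := w ⊔ u.  Associativity makes ≲ a preorder that contains ≤ and is closed
   under joins, so w ≲ a, w ≲ b and a ⊔ z = b ⊔ z = u.  Distributivity below u
   then forces u ≤ z, hence z = u and w ≤ u.  Below a common upper bound ≲
   implies ≤, so w ≤ a ∩ b = c, i.e. c ⊔ d = c. *)

Section Semilattice.

Variables (L : Type) (cap : L -> L -> L).

Local Infix "∩" := cap (at level 40, left associativity).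
Local Notation "x ≤ y" := (sle cap x y) (at level 70).

Hypothesis capA : forall x y z, x ∩ (y ∩ z) = x ∩ y ∩ z.
Hypothesis capC : forall x y, x ∩ y = y ∩ x.
Hypothesis capxx : forall x, x ∩ x = x.

Lemma meet_l x y : x ≤ y -> x ∩ y = x.
Proof. intros h; symmetry; exact h. Qed.

Lemma meet_r x y : x ≤ y -> y ∩ x = x.
Proof. intros h; rewrite capC; exact (meet_l h). Qed.

Lemma le_refl x : x ≤ x.
Proof. unfold sle; rewrite capxx; reflexivity. Qed.

Lemma le_trans x y z : x ≤ y -> y ≤ z -> x ≤ z.
Proof.
  unfold sle; intros hxy hyz.
  rewrite hxy at 1; rewrite hyz at 1; rewrite capA, <- hxy; reflexivity.
Qed.

Lemma le_anti x y : x ≤ y -> y ≤ x -> x = y.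
Proof. unfold sle; intros hxy hyx; rewrite hxy, capC, <- hyx; reflexivity. Qed.

Lemma leIl x y : x ∩ y ≤ x.
Proof. unfold sle; rewrite (capC (x ∩ y) x), capA, capxx; reflexivity. Qed.

Lemma leIr x y : x ∩ y ≤ y.
Proof. rewrite capC; apply leIl. Qed.

Lemma lexI x y z : z ≤ x -> z ≤ y -> z ≤ x ∩ y.
Proof. unfold sle; intros hx hy; rewrite capA, <- hx; exact hy. Qed.

Section OSemilattice.

Variable cup : L -> L -> L.

Local Infix "⊔" := cup (at level 50, left associativity).
Local Notation "x ≲ y" := (slesssim cup x y) (at level 70).

Hypothesis leUl : forall x y, x ≤ x ⊔ y.
Hypothesis join_meets_le : forall x y z, (x ∩ y) ⊔ (y ∩ z) ≤ y.
Hypothesis join_le_join_meet : forall x y, x ⊔ y ≤ x ⊔ (y ∩ (x ⊔ y)).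
Hypothesis meet_le_join : forall x y z, x ∩ z ≤ (x ∩ y) ⊔ z.

Lemma join_le_bounded u x y : x ≤ u -> y ≤ u -> x ⊔ y ≤ u.
Proof.
  intros hx hy.
  rewrite <- (meet_l hx), <- (meet_r hy); apply join_meets_le.
Qed.

Lemma leUr_bounded u x y : x ≤ u -> y ≤ u -> y ≤ x ⊔ y.
Proof.
  intros hx hy.
  pose proof (meet_le_join u x y) as e.
  rewrite (meet_r hy), (meet_r hx) in e; exact e.
Qed.

Lemma le_lesssim x y : x ≤ y -> x ≲ y.
Proof.
  intros h; apply le_anti; [exact (join_le_bounded (le_refl y) h) | apply leUl].
Qed.

Lemma join_r x y : x ≤ y -> x ⊔ y = y.
Proof.
  intros h; apply le_anti.
  - exact (join_le_bounded h (le_refl y)).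
  - exact (leUr_bounded h (le_refl y)).
Qed.

Lemma joinC_le_bounded u x y : x ≤ u -> y ≤ u -> x ⊔ y ≤ y ⊔ x.
Proof.
  intros hx hy.
  pose proof (join_meets_le x (y ⊔ x) y) as e.
  rewrite (meet_l (leUr_bounded hy hx)), (meet_r (leUl y x)) in e; exact e.
Qed.

Lemma joinC_bounded u x y : x ≤ u -> y ≤ u -> x ⊔ y = y ⊔ x.
Proof.
  intros hx hy; apply le_anti; [exact (joinC_le_bounded hx hy) | exact (joinC_le_bounded hy hx)].
Qed.

Lemma join_meet_join x y : x ⊔ y = x ⊔ (y ∩ (x ⊔ y)).
Proof.
  apply le_anti; [apply join_le_join_meet |].
  pose proof (join_meets_le x (x ⊔ y) (y ∩ (x ⊔ y))) as e.
  rewrite <- (leUl x y), (meet_r (leIr y (x ⊔ y))) in e.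
  exact e.
Qed.

Lemma lesssim_bounded_le u x y : x ≤ u -> y ≤ u -> x ≲ y -> x ≤ y.
Proof.
  unfold slesssim; intros hx hy hxy; rewrite <- hxy; exact (leUr_bounded hy hx).
Qed.

Section Associative.

Hypothesis joinA : forall x y z, x ⊔ (y ⊔ z) = x ⊔ y ⊔ z.

Lemma lesssim_trans x y z : x ≲ y -> y ≲ z -> x ≲ z.
Proof. unfold slesssim; intros hxy hyz; rewrite <- hyz, <- joinA, hxy; reflexivity. Qed.

Lemma join_lesssim x y z : x ≲ z -> y ≲ z -> x ⊔ y ≲ z.
Proof. unfold slesssim; intros hx hy; rewrite joinA, hx; exact hy. Qed.

Hypothesis joinIr : forall a b c d,
  (a ∩ d) ⊔ ((b ∩ d) ∩ (c ∩ d)) = ((a ∩ d) ⊔ (b ∩ d)) ∩ ((a ∩ d) ⊔ (c ∩ d)).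

Lemma joinIr_bounded u x y z : x ≤ u -> y ≤ u -> z ≤ u ->
  x ⊔ (y ∩ z) = (x ⊔ y) ∩ (x ⊔ z).
Proof.
  intros hx hy hz.
  rewrite <- (meet_l hx), <- (meet_l hy), <- (meet_l hz); apply joinIr.
Qed.

(* The witness is m := z ∩ u: by (iii) a ⊔ m = b ⊔ m = u, and as a ∩ b ≤ m,
   distributivity gives m = m ⊔ (a ∩ b) = (m ⊔ a) ∩ (m ⊔ b) = u. *)
Lemma ub_le_of_join_eq u a b z : a ≤ u -> b ≤ u -> a ∩ b ≤ z ->
  a ⊔ z = u -> b ⊔ z = u -> u ≤ z.
Proof.
  intros hau hbu habz haz hbz.
  assert (hmu : z ∩ u ≤ u) by apply leIr.
  assert (hma : z ∩ u ⊔ a = u).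
  { rewrite <- (joinC_bounded hau hmu), <- haz at 1.
    rewrite <- join_meet_join; exact haz. }
  assert (hmb : z ∩ u ⊔ b = u).
  { rewrite <- (joinC_bounded hbu hmu), <- hbz at 1.
    rewrite <- join_meet_join; exact hbz. }
  assert (habm : a ∩ b ≤ z ∩ u) by exact (lexI habz (le_trans (leIl a b) hau)).
  assert (hm : z ∩ u = u).
  { rewrite <- (le_lesssim habm).
    rewrite (joinIr_bounded hmu hau hbu), hma, hmb; apply capxx. }
  rewrite <- hm; apply leIl.
Qed.

Lemma lesssim_meet_bounded u a b d : a ≤ u -> b ≤ u ->
  d ≲ a -> d ≲ b -> d ≲ a ∩ b.
Proof.
  intros hau hbu hda hdb.
  set (c := a ∩ b); set (w := c ⊔ d); set (z := w ⊔ u).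
  assert (hwa : w ≲ a) by exact (join_lesssim (le_lesssim (leIl a b)) hda).
  assert (hwb : w ≲ b) by exact (join_lesssim (le_lesssim (leIr a b)) hdb).
  assert (hzu : z ≲ u).
  { apply join_lesssim; [exact (lesssim_trans hwa (le_lesssim hau)) |].
    exact (le_lesssim (le_refl u)). }
  assert (haz : a ⊔ z = u) by (unfold z; rewrite joinA, hwa; exact (join_r hau)).
  assert (hbz : b ⊔ z = u) by (unfold z; rewrite joinA, hwb; exact (join_r hbu)).
  assert (hcz : c ≤ z) by exact (le_trans (leUl c d) (leUl w u)).
  assert (hz : z = u).
  { rewrite <- (join_r (ub_le_of_join_eq hau hbu hcz haz hbz)); exact hzu. }
  assert (hwu : w ≤ u) by (rewrite <- hz; apply leUl).
  apply le_anti.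
  - apply lexI; [exact (lesssim_bounded_le hwu hau hwa) |].
    exact (lesssim_bounded_le hwu hbu hwb).
  - apply leUl.
Qed.

End Associative.

End OSemilattice.

End Semilattice.

Theorem lemma3p5 (S : Type) (cap cup : S -> S -> S)
  (Hado : is_ado_semilattice cap cup) (a b d : S)
  (Hub : exists u, sle cap a u /\ sle cap b u)
  (Hda : slesssim cup d a) (Hdb : slesssim cup d b) :
  slesssim cup d (cap a b).
Proof.
  destruct Hado as [[[capA [capC capxx]] [leUl [join_meets_le [join_le_join_meet meet_le_join]]]]
                    [joinIr joinA]].
  destruct Hub as [u [hau hbu]].
  exact (lesssim_meet_bounded capA capC capxx leUl join_meets_le join_le_join_meet meet_le_join
           joinA joinIr hau hbu Hda Hdb).
Qed.
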